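(* Let $X$ be a countable set. (i) If $\mathcal{A}\subseteq\mathcal{P}_\infty(X)$ is hereditary and $\mathcal{A}^\perp$ is bisequential, then $\mathcal{A}$ is an M-family. (ii) If $\mathcal{I}$ is a bisequential ideal on $X$, then $\mathcal{I}^\perp$ is an M-family.
   Context: $\mathcal{P}_\infty(X)$: infinite subsets of $X$. Hereditary: closed under infinite subsets. An ideal on $X$ is a hereditary family of infinite subsets of $X$ closed under finite unions. $\mathcal{A}^\perp=\{B\in\mathcal{P}_\infty(X):B\cap A\text{ finite }\forall A\in\mathcal{A}\}$. An M-family is a hereditary family $\mathcal{A}$ such that for every sequence $(A_n)_n$ in $\mathcal{A}$ there is $A\in\mathcal{A}$ with $A\setminus\bigcup_{i\ge n}A_i$ finite for every $n$. For an ultrafilter $p$ on $X$, $p^*=\{X\setminus A:A\in p\}$. An ideal $\mathcal{I}$ is bisequential if for every ultrafilter $p$ on $X$ with $\mathcal{I}\subseteq p^*$ there is a sequence $(B_n)_n$ in $p^*$ such that every $L\in\mathcal{I}$ satisfies $L\setminus B_n$ finite for some $n$. *)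

From Stdlib Require Import List Classical.
Import ListNotations.
Set Implicit Arguments.

Definition countable (X : Type) : Prop :=
  exists f : X -> nat, forall x y, f x = f y -> x = y.

Definition subset {X : Type} (A B : X -> Prop) : Prop := forall x, A x -> B x.

Definition finite {X : Type} (A : X -> Prop) : Prop :=
  exists l : list X, forall x, A x -> In x l.

Definition infinite {X : Type} (A : X -> Prop) : Prop := ~ finite A.

Definition family_of_infinite {X : Type} (F : (X -> Prop) -> Prop) : Prop :=
  forall A, F A -> infinite A.

Definition hereditary {X : Type} (F : (X -> Prop) -> Prop) : Prop :=
  family_of_infinite F /\
  (forall A B, F A -> infinite B -> subset B A -> F B).

Definition ideal {X : Type} (F : (X -> Prop) -> Prop) : Prop :=
  hereditary F /\
  (forall A B, F A -> F B -> F (fun x => A x \/ B x)).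

Definition perp {X : Type} (F : (X -> Prop) -> Prop) : (X -> Prop) -> Prop :=
  fun B => infinite B /\ forall A, F A -> finite (fun x => B x /\ A x).

Definition M_family {X : Type} (F : (X -> Prop) -> Prop) : Prop :=
  hereditary F /\
  forall An : nat -> (X -> Prop), (forall n, F (An n)) ->
    exists A, F A /\
      forall n, finite (fun x => A x /\ ~ (exists i, n <= i /\ An i x)).

Definition ultrafilter {X : Type} (p : (X -> Prop) -> Prop) : Prop :=
  p (fun _ => True) /\
  ~ p (fun _ => False) /\
  (forall A B, p A -> subset A B -> p B) /\
  (forall A B, p A -> p B -> p (fun x => A x /\ B x)) /\
  (forall A, p A \/ p (fun x => ~ A x)).

Definition dual_ideal {X : Type} (p : (X -> Prop) -> Prop) : (X -> Prop) -> Prop :=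
  fun B => exists A, p A /\ forall x, B x <-> ~ A x.

Definition bisequential {X : Type} (I : (X -> Prop) -> Prop) : Prop :=
  forall p, ultrafilter p -> subset I (dual_ideal p) ->
    exists Bn : nat -> (X -> Prop),
      (forall n, dual_ideal p (Bn n)) /\
      forall L, I L -> exists n, finite (fun x => L x /\ ~ Bn n x).

From Stdlib Require Import List Classical ClassicalEpsilon Arith Lia.
From mathcomp Require filter.

(* Both parts of Proposition 6 follow from one diagonalisation theorem: if I
   is bisequential on a countable X and (C n) is a decreasing sequence of
   sets each containing a member of I^perp, then some D in I^perp is almost
   contained in every C n.  Proof: no C n is I-small (covered by finitely
   many members of I plus a finite set), so the C n and the complements of
   I-small sets generate a proper filter, extended to an ultrafilter p by the
   ultrafilter lemma of mathcomp-classical.  Then I is inside p^* and p is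
   free, so bisequentiality gives sets B n in p^*; an infinite
   pseudo-intersection D of the sets (C n minus B n) is the required set.
   Part (ii) takes C n = the n-th tail of the sequence; part (i) applies the
   theorem to I := A^perp (members of A lie in A^perp^perp) and then finds,
   as D is not in A^perp, a member of A with infinite trace on D. *)

Section Diagonal.

Variable X : Type.

Definition almost_subset (A B : X -> Prop) : Prop :=
  finite (fun x => A x /\ ~ B x).

Lemma finite_subset (A B : X -> Prop) : finite B -> subset A B -> finite A.
Proof. intros [l hl] hAB; exists l; auto. Qed.

Lemma finite_union (A B : X -> Prop) :
  finite A -> finite B -> finite (fun x => A x \/ B x).
Proof.
  intros [l hl] [l' hl']; exists (l ++ l').
  intros x [h | h]; apply in_or_app; auto.
Qed.

Lemma finite_empty : finite (fun _ : X => False).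
Proof. exists nil; intros x []. Qed.

Lemma finite_prefix (x : nat -> X) (n : nat) :
  finite (fun y => exists m, m < n /\ y = x m).
Proof.
  exists (map x (seq 0 n)); intros y [m [hm ->]].
  apply in_map, in_seq; lia.
Qed.

Lemma finite_below (f : X -> nat) :
  (forall x y, f x = f y -> x = y) -> forall n, finite (fun x => f x < n).
Proof.
  intros finj n; induction n as [| n [l hl]].
  - exists nil; intros x h; lia.
  - destruct (classic (exists y, f y = n)) as [[y hy] | hn].
    + exists (y :: l); intros x hx.
      destruct (Nat.eq_dec (f x) n) as [e | e].
      * left; symmetry; apply finj; congruence.
      * right; apply hl; lia.
    + exists l; intros x hx; apply hl.
      destruct (Nat.eq_dec (f x) n) as [e | e]; [exfalso; eauto | lia].
Qed.

Lemma range_infinite (f : X -> nat) (x : nat -> X) :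
  (forall n, n <= f (x n)) -> infinite (fun y => exists m, y = x m).
Proof.
  intros hx [l hl].
  assert (bound : exists M, forall y, In y l -> f y < M).
  { clear hl; induction l as [| a l [M hM]].
    - exists 0; intros y [].
    - exists (S (M + f a)); intros y [<- | h]; [lia |].
      specialize (hM y h); lia. }
  destruct bound as [M hM].
  specialize (hM (x M) (hl (x M) (ex_intro _ M eq_refl))).
  specialize (hx M); lia.
Qed.

Lemma ultrafilter_extension (F : (X -> Prop) -> Prop) :
  F (fun _ => True) -> ~ F (fun _ => False) ->
  (forall A B, F A -> subset A B -> F B) ->
  (forall A B, F A -> F B -> F (fun x => A x /\ B x)) ->
  exists p, ultrafilter p /\ forall S, F S -> p S.
Proof.
  intros hT h0 hS hI.
  assert (proper : filter.ProperFilter F).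
  { constructor; [exact h0 |]. constructor; [exact hT | exact hI |].
    intros A B hAB hA; exact (hS A B hA hAB). }
  destruct (filter.ultraFilterLemma proper) as [p [up hFp]].
  exists p; split; [| exact hFp].
  pose proof (@filter.ultra_proper _ _ up) as pp.
  repeat split.
  - exact filter.filterT.
  - exact (filter.filter_not_empty p).
  - intros A B hA hAB; exact (filter.filterS hAB hA).
  - intros A B hA hB; exact (filter.filterI hA hB).
  - intros A; exact (filter.in_ultra_setVsetC A up).
Qed.

Lemma ultrafilter_nonempty (p : (X -> Prop) -> Prop) (S : X -> Prop) :
  ultrafilter p -> p S -> exists x, S x.
Proof.
  intros [_ [h0 [hS _]]] hp; apply NNPP; intro hn.
  apply h0, (hS S); [exact hp |]. intros x hx; apply hn; eauto.
Qed.

Lemma ultrafilter_initial_meet (p : (X -> Prop) -> Prop) (T : nat -> X -> Prop) :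
  ultrafilter p -> (forall n, p (T n)) ->
  forall n, p (fun x => forall k, k <= n -> T k x).
Proof.
  intros [_ [_ [hS [hI _]]]] hT n; induction n as [| n IH].
  - apply (hS (T 0)); [exact (hT 0) |].
    intros y hy k hk; replace k with 0 by lia; exact hy.
  - apply (hS _ _ (hI _ _ IH (hT (S n)))); intros y [h1 h2] k hk.
    destruct (Nat.eq_dec k (S n)) as [-> | e]; [exact h2 | apply h1; lia].
Qed.

Lemma dual_ideal_complement (p : (X -> Prop) -> Prop) (B : X -> Prop) :
  ultrafilter p -> dual_ideal p B -> p (fun x => ~ B x).
Proof.
  intros [_ [_ [hS _]]] [A [hA hB]].
  apply (hS A); [exact hA |]. intros x hx hBx; exact (proj1 (hB x) hBx hx).
Qed.

(* Take [x n] in the first [n+1] members with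
   [f (x n) >= n]; their range works. *)
Lemma pseudo_intersection (f : X -> nat) (p : (X -> Prop) -> Prop)
  (T : nat -> X -> Prop) :
  (forall x y, f x = f y -> x = y) -> ultrafilter p ->
  (forall E, finite E -> p (fun x => ~ E x)) -> (forall n, p (T n)) ->
  exists D, infinite D /\ forall n, almost_subset D (T n).
Proof.
  intros finj hp hcof hT.
  assert (pick : forall n, exists y, (forall k, k <= n -> T k y) /\ n <= f y).
  { intros n.
    pose proof hp as [_ [_ [_ [hI _]]]].
    destruct (ultrafilter_nonempty p _ hp
                (hI _ _ (ultrafilter_initial_meet p T hp hT n)
                    (hcof _ (finite_below f finj n)))) as [y [hy hfy]].
    exists y; split; [exact hy | lia]. }
  destruct (choice _ pick) as [x hx].
  exists (fun y => exists m, y = x m); split.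
  - apply (range_infinite f); intros n; exact (proj2 (hx n)).
  - intros n; apply (finite_subset _ _ (finite_prefix x n)).
    intros y [[m ->] hm]; exists m; split; [| reflexivity].
    destruct (Nat.lt_ge_cases m n) as [l | l]; [exact l |].
    exfalso; apply hm, (proj1 (hx m)); exact l.
Qed.

Variable I : (X -> Prop) -> Prop.

(* The ideal generated by [I] and the finite sets: the sets covered by
   finitely many members of [I] and a finite set. *)
Inductive small : (X -> Prop) -> Prop :=
  | small_finite E : finite E -> small E
  | small_member L : I L -> small L
  | small_union K K' : small K -> small K' -> small (fun x => K x \/ K' x)
  | small_subset K K' : small K' -> subset K K' -> small K.

Lemma perp_small_finite (Y K : X -> Prop) :
  perp I Y -> small K -> finite (fun x => Y x /\ K x).
Proof.
  intros [_ hY] hK; induction hK as [E hE | L hL | K K' _ IH _ IH' | K K' _ IH hKK'].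
  - apply (finite_subset _ _ hE); intros x [_ h]; exact h.
  - exact (hY L hL).
  - apply (finite_subset _ _ (finite_union _ _ IH IH')); intros x [h [h' | h']]; auto.
  - apply (finite_subset _ _ IH); intros x [h h']; auto.
Qed.

Section Avoiding.

Variable C : nat -> X -> Prop.
Hypothesis C_decreasing : forall n m x, n <= m -> C m x -> C n x.
Hypothesis C_perp : forall n, exists Y, perp I Y /\ subset Y (C n).

Lemma C_not_small (n : nat) : ~ small (C n).
Proof.
  intros hsmall; destruct (C_perp n) as [Y [hY hYC]].
  apply (proj1 hY), (finite_subset _ _ (perp_small_finite Y _ hY hsmall)).
  intros x hx; auto.
Qed.

(* An ultrafilter containing every [C n] and no small set: it extends the
   filter of sets [S] such that [C n \ S] is small for some [n]. *)
Lemma ultrafilter_avoiding_small :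
  exists p, ultrafilter p /\ (forall n, p (C n)) /\
            (forall K, small K -> p (fun x => ~ K x)).
Proof.
  set (F := fun S => exists n, small (fun x => C n x /\ ~ S x)).
  assert (hempty : forall n S, (forall x, C n x -> S x) -> F S).
  { intros n S hS; exists n; apply (small_subset _ _ (small_finite _ finite_empty)).
    intros x [h h']; exact (h' (hS x h)). }
  assert (F_top : F (fun _ => True)) by (apply (hempty 0); auto).
  assert (F_proper : ~ F (fun _ => False)).
  { intros [n hn]; apply (C_not_small n), (small_subset _ _ hn).
    intros x hx; split; auto. }
  assert (F_up : forall A B, F A -> subset A B -> F B).
  { intros A B [n hn] hAB; exists n; apply (small_subset _ _ hn).
    intros x [h h']; split; auto. }
  assert (F_meet : forall A B, F A -> F B -> F (fun x => A x /\ B x)).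
  { intros A B [n hn] [m hm]; exists (max n m).
    apply (small_subset _ _ (small_union _ _ hn hm)); intros x [h h'].
    apply not_and_or in h' as [h' | h']; [left | right];
      split; auto; apply (C_decreasing _ (max n m)); auto; lia. }
  destruct (ultrafilter_extension F F_top F_proper F_up F_meet) as [p [hp hFp]].
  exists p; split; [exact hp | split].
  - intros n; apply hFp, (hempty n); auto.
  - intros K hK; apply hFp; exists 0; apply (small_subset _ _ hK).
    intros x [_ h]; apply NNPP; exact h.
Qed.

Hypothesis X_countable : countable X.
Hypothesis I_bisequential : bisequential I.

Theorem bisequential_diagonal :
  exists D, perp I D /\ forall n, almost_subset D (C n).
Proof.
  destruct ultrafilter_avoiding_small as [p [hp [hpC hpsmall]]].
  assert (I_dual : subset I (dual_ideal p)).
  { intros L hL; exists (fun x => ~ L x); split.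
    - exact (hpsmall L (small_member L hL)).
    - intros x; split; [auto | apply NNPP]. }
  destruct (I_bisequential p hp I_dual) as [B [hB hcover]].
  set (T := fun n x => C n x /\ ~ B n x).
  destruct X_countable as [f finj].
  destruct (pseudo_intersection f p T finj hp) as [D [hDinf hDT]].
  - intros E hE; exact (hpsmall E (small_finite E hE)).
  - intros n; pose proof hp as [_ [_ [_ [hI _]]]].
    exact (hI _ _ (hpC n) (dual_ideal_complement p (B n) hp (hB n))).
  - exists D; split; [split; [exact hDinf |] |].
    + intros L hL; destruct (hcover L hL) as [n hn].
      apply (finite_subset _ _ (finite_union _ _ hn (hDT n))).
      intros x [hD hL']; destruct (classic (B n x)) as [h | h]; [right | left]; auto.
      split; [exact hD |]; intros [_ h']; exact (h' h).
    + intros n; apply (finite_subset _ _ (hDT n)).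
      intros x [hD h]; split; [exact hD |]; intros [h' _]; exact (h h').
Qed.

End Avoiding.

End Diagonal.

Definition tail {X : Type} (An : nat -> X -> Prop) (n : nat) : X -> Prop :=
  fun x => exists i, n <= i /\ An i x.

Lemma tail_decreasing {X : Type} (An : nat -> X -> Prop) :
  forall n m x, n <= m -> tail An m x -> tail An n x.
Proof. intros n m x h [i [hi hx]]; exists i; split; [lia | exact hx]. Qed.

Lemma perp_hereditary {X : Type} (F : (X -> Prop) -> Prop) :
  hereditary (perp F).
Proof.
  split; [intros L [h _]; exact h |].
  intros A B [_ hA] hB hBA; split; [exact hB |]; intros K hK.
  apply (finite_subset _ _ _ (hA K hK)); intros x [h h']; auto.
Qed.

Lemma in_perp_perp {X : Type} (F : (X -> Prop) -> Prop) (Y : X -> Prop) :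
  family_of_infinite F -> F Y -> perp (perp F) Y.
Proof.
  intros hF hY; split; [exact (hF Y hY) |].
  intros L [_ hL]; apply (finite_subset _ _ _ (hL Y hY)); intros x [h h']; auto.
Qed.

(* An infinite set not in [F^perp] has an infinite trace on some member of
   [F]: this is where an element of an M-family is found in part (i). *)
Lemma not_perp_witness {X : Type} (F : (X -> Prop) -> Prop) (D : X -> Prop) :
  infinite D -> ~ perp F D -> exists A, F A /\ infinite (fun x => D x /\ A x).
Proof.
  intros hD hn; apply NNPP; intro hno; apply hn; split; [exact hD |].
  intros A hA; apply NNPP; intro hinf; apply hno; eauto.
Qed.

Lemma perp_perp_not_perp {X : Type} (F : (X -> Prop) -> Prop) (D : X -> Prop) :
  perp (perp F) D -> ~ perp F D.
Proof.
  intros [hD hDD] hpD; apply hD, (finite_subset _ _ _ (hDD D hpD)); intros x hx; split; exact hx.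
Qed.

Theorem proposition6 (X : Type) (HX : countable X) :
  (forall A : (X -> Prop) -> Prop,
      hereditary A -> bisequential (perp A) -> M_family A) /\
  (forall I : (X -> Prop) -> Prop,
      ideal I -> bisequential I -> M_family (perp I)).
Proof.
  split.
  - intros A hA hbis; split; [exact hA |]; intros An hAn.
    assert (tails_perp : forall n, exists Y, perp (perp A) Y /\ subset Y (tail An n)).
    { intros n; exists (An n); split.
      - exact (in_perp_perp A (An n) (proj1 hA) (hAn n)).
      - intros x hx; exists n; auto. }
    destruct (bisequential_diagonal X (perp A) (tail An) (tail_decreasing An)
                tails_perp HX hbis) as [D [hD hDtail]].
    destruct (not_perp_witness A D (proj1 hD) (perp_perp_not_perp A D hD))
      as [A0 [hA0 hinf]].
    exists (fun x => D x /\ A0 x); split.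
    + apply (proj2 hA A0); [exact hA0 | exact hinf | intros x [_ h]; exact h].
    + intros n; apply (finite_subset _ _ _ (hDtail n)); intros x [[h _] h']; auto.
  - intros I _ hbis; split; [exact (perp_hereditary I) |]; intros An hAn.
    assert (tails_perp : forall n, exists Y, perp I Y /\ subset Y (tail An n)).
    { intros n; exists (An n); split; [exact (hAn n) | intros x hx; exists n; auto]. }
    exact (bisequential_diagonal X I (tail An) (tail_decreasing An) tails_perp HX hbis).
Qed.
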